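(* Let $G$ be an abelian group, $n\ge 4$ an even integer, and $P_0,P_1,\dots,P_{n-1}$ distinct elements of $G$ forming an alternating cycle in the sum cograph, i.e. there are $a,b\in G$ with $P_i+P_{i+1}=a$ for all even $i$ and $P_i+P_{i+1}=b$ for all odd $i$ (indices modulo $n$). Then $G$ contains a nonzero element $x$ with $(n/2)x=0$.
   Context: A sum cograph over an abelian group $G$ has as points distinct elements of $G$, and the edge between distinct points $X,Y$ is $X+Y$. *)

From HB Require Import structures.
From mathcomp Require Import all_boot all_order all_algebra.
Set Implicit Arguments. Unset Strict Implicit. Unset Printing Implicit Defensive.
Import GRing.Theory.

From HB Require Import structures.
From mathcomp Require Import all_boot all_order all_algebra.
Set Implicit Arguments.
Unset Strict Implicit.

Import GRing.Theory.
Local Open Scope ring_scope.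

(* Since n is even, the alternating relations hold for all indices read
   modulo n. From P i + P (i+1) = a and P (i+1) + P (i+2) = b one gets
   P (i+2) = P i + (b - a) for even i, so walking once around the cycle
   of length n = 2m adds m (b - a) to P 0 and returns to P 0; and
   b - a <> 0 because P 2 <> P 0. *)

Lemma addr_shift2 (G : zmodType) (p q r a b : G) :
  p + q = a -> q + r = b -> r = p + (b - a).
Proof. by move=> <- <-; rewrite [q + r]addrC [p + q]addrC addrKA addrC subrK. Qed.

Section AlternatingCycle.

Variables (G : zmodType) (n : nat) (P : nat -> G) (a b : G).
Hypotheses (n_gt0 : (0 < n)%N) (n_even : ~~ odd n).
Hypothesis P_sum :
  forall i : nat, (i < n)%N -> P i + P (i.+1 %% n)%N = (if odd i then b else a).

Lemma alternating_sum_mod i :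
  P (i %% n)%N + P (i.+1 %% n)%N = (if odd i then b else a).
Proof.
have -> : (i.+1 %% n = (i %% n).+1 %% n)%N.
  by rewrite -[i.+1]addn1 -[(i %% n).+1]addn1 modnDml.
by rewrite P_sum ?ltn_pmod // odd_mod // (negbTE n_even).
Qed.

Lemma alternating_even_mod k : P (k.*2 %% n)%N = P 0%N + (b - a) *+ k.
Proof.
elim: k => [|k IHk]; first by rewrite mod0n mulr0n addr0.
have shift := addr_shift2 (alternating_sum_mod k.*2) (alternating_sum_mod k.*2.+1).
rewrite /= !odd_double /= in shift.
by rewrite doubleS shift IHk mulrSr -addrA.
Qed.

Lemma alternating_period : (b - a) *+ n./2 = 0.
Proof.
have := alternating_even_mod n./2.
rewrite even_halfK // modnn.
by move=> P0_shift; apply: (addrI (P 0%N)); rewrite addr0 -P0_shift.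
Qed.

End AlternatingCycle.

Theorem corollary2p1p5 (G : zmodType) (n : nat) (P : nat -> G) (a b : G) :
  (4 <= n)%N -> ~~ odd n ->
  (forall i j : nat, (i < n)%N -> (j < n)%N -> i <> j -> P i <> P j) ->
  (forall i : nat, (i < n)%N ->
     P i + P (i.+1 %% n)%N = (if odd i then b else a)) ->
  exists x : G, x != 0 /\ x *+ n./2 = 0.
Proof.
move=> n_ge4 n_even P_inj P_sum.
have n_gt2 : (2 < n)%N by apply: leq_trans n_ge4.
have n_gt0 : (0 < n)%N by apply: leq_trans n_ge4.
exists (b - a); split; last exact: alternating_period n_gt0 n_even P_sum.
apply/eqP => ba0.
have P2_eq_P0 := alternating_even_mod n_gt0 n_even P_sum 1.
rewrite modn_small // ba0 mul0rn addr0 in P2_eq_P0.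
exact: P_inj 2%N 0%N n_gt2 n_gt0 _ P2_eq_P0.
Qed.
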